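(* Let $H(c)$ and $p(c)$ (for $c>0$) be the limits $H(c)=\lim_{N\to\infty}N^{-1}H(\mathbb{G}(N,\lfloor cN\rfloor))$ (in probability) and $p(c)=\lim_{N\to\infty}N^{-1}\log p(N,\lfloor cN\rfloor)$. For each of the Coloring, K-SAT and NAE-K-SAT models there exists a critical value $c^*_H$ such that $H(c)=c$ for $c<c^*_H$ and $H(c)<c$ for $c>c^*_H$. Similarly, there exists $c^*_p$ such that $p(c)=0$ for $c<c^*_p$ and $p(c)<0$ for $c>c^*_p$.
   Context: $[N]=\{1,\dots,N\}$; $\chi=\{0,\dots,q-1\}$. $\mathbb{G}(N,M)$ is the random hypergraph on $[N]$ with $M$ directed $K$-hyperedges chosen independently and uniformly at random from $[N]^K$. For a hypergraph $G=([N],E)$ with edge potentials $H_e$, $H(x)=\sum_{e\in E}H_e(x_e)$ for $x\in\chi^N$ (node potentials are zero in these models) and $H(G)=\max_x H(x)$. Models: $q$-Coloring ($K=2$, $H_e(x,y)=1$ if $x\ne y$, $0$ if $x=y$); K-SAT ($q=2$; for each hyperedge independently $a_e$ uniform in $\{0,1\}^K$, $H_e(a_e)=0$, $H_e=1$ otherwise); NAE-K-SAT ($q=2$; $H_e(a_e)=H_e(\mathbf 1-a_e)=0$, $H_e=1$ otherwise). $p(N,M)=\mathbb{P}(H(\mathbb{G}(N,M))=M)$. The limits $H(c)$ and $p(c)$ exist for every $c>0$, and $H$ is Lipschitz continuous with constant $1$. *)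

From Stdlib Require Import Reals.
From mathcomp Require Import all_boot.

Set Implicit Arguments.
Unset Strict Implicit.
Unset Printing Implicit Defensive.

Inductive model := Coloring (q : nat) | KSAT (K : nat) | NAESAT (K : nat).

Definition model_ok (m : model) : Prop :=
  match m with
  | Coloring q => (2 <= q)%N
  | KSAT K => (2 <= K)%N
  | NAESAT K => (2 <= K)%N
  end.

Definition arity (m : model) : nat :=
  match m with Coloring _ => 2 | KSAT K => K | NAESAT K => K end.

Definition nq (m : model) : nat :=
  match m with Coloring q => q | KSAT _ => 2 | NAESAT _ => 2 end.

Definition label (m : model) : finType :=
  match m with
  | Coloring _ => unit
  | KSAT K => {ffun 'I_K -> bool}
  | NAESAT K => {ffun 'I_K -> bool}
  end.

Definition pot (m : model) :
    label m -> {ffun 'I_(arity m) -> 'I_(nq m)} -> nat :=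
  match m as m0 return label m0 -> {ffun 'I_(arity m0) -> 'I_(nq m0)} -> nat with
  | Coloring q => fun _ y => if nat_of_ord (y ord0) == nat_of_ord (y ord_max) then 0 else 1
  | KSAT K => fun a y =>
      if [forall k, nat_of_ord (y k) == nat_of_bool (a k)] then 0 else 1
  | NAESAT K => fun a y =>
      if [forall k, nat_of_ord (y k) == nat_of_bool (a k)]
         || [forall k, nat_of_ord (y k) == nat_of_bool (~~ a k)] then 0 else 1
  end.

(* sample space of G(N,M) (with its random labels): M independent uniform
   directed hyperedges in [N]^K (here 'I_N = {0..N-1}), each with an
   independent uniform label; the probability is uniform on this finite set *)
Definition Omega (N M : nat) (m : model) : finType :=
  {ffun 'I_M -> ({ffun 'I_(arity m) -> 'I_N} * label m)%type}.

Definition Hval (N M : nat) (m : model) (w : Omega N M m)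
    (x : {ffun 'I_N -> 'I_(nq m)}) : nat :=
  \sum_(i < M) pot (w i).2 [ffun k => x ((w i).1 k)].

Definition Hmax (N M : nat) (m : model) (w : Omega N M m) : nat :=
  \max_(x : {ffun 'I_N -> 'I_(nq m)}) Hval w x.

Definition probR (N M : nat) (m : model) (E : pred (Omega N M m)) : R :=
  Rdiv (INR #|E|) (INR #|Omega N M m|).

Definition pSAT (N M : nat) (m : model) : R :=
  probR (fun w : Omega N M m => Hmax w == M).

Definition Mof (c : R) (N : nat) : nat := Z.to_nat (Int_part (c * INR N)).

Definition dev_event (N M : nat) (m : model) (h eps : R) : pred (Omega N M m) :=
  fun w => if Rlt_dec eps (Rabs (Rminus (Rdiv (INR (Hmax w)) (INR N)) h)) then true else false.

Arguments probR N M m E : clear implicits.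
Arguments pSAT N M m : clear implicits.
Arguments dev_event N M m h eps : clear implicits.
Arguments Hmax N M m w : clear implicits.

(* Both c |-> H(c) - c and p are nonpositive (H(G) <= M, p(N,M) <= 1)
   and nonincreasing: deleting a hyperedge lowers H(G) by at most one, so
   P(H(G(N,M+d)) >= t + d) <= P(H(G(N,M)) >= t), which compares the laws of
   H(G(N,floor(c N))) for two densities.  By the first-moment method both are
   negative at a large density: a fixed assignment violates a uniform random
   hyperedge with probability at least 1/D (D = q^2 for coloring, 2^K for the SAT
   models), hence P(H(G(N,M)) >= M - k) <= q^N 2^k (1 - 1/(2D))^M.  A nonpositive
   nonincreasing function which is negative somewhere vanishes exactly below the
   supremum of its zero set. *)

From Stdlib Require Import Reals Lra Lia Classical.
From mathcomp Require Import all_boot zify.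

Set Implicit Arguments.
Unset Strict Implicit.
Unset Printing Implicit Defensive.

Section RealFacts.
Local Open Scope R_scope.

Lemma INR_expn a n : INR (a ^ n)%N = INR a ^ n.
Proof. by elim: n => [|n IH] //; rewrite expnS -multE mult_INR IH. Qed.

Lemma Rinv_INR_ge0 n : 0 <= / INR n.
Proof.
case: n => [|n]; first by rewrite Rinv_0; apply: Rle_refl.
by left; apply/Rinv_0_lt_compat/lt_0_INR; lia.
Qed.

Lemma Rdiv_le_of_le_mul a b n : 0 < n -> a <= b * n -> a / n <= b.
Proof.
move=> hn hab; apply: (Rmult_le_reg_r n) => //.
by rewrite /Rdiv Rmult_assoc Rinv_l ?Rmult_1_r //; apply: Rgt_not_eq.
Qed.

Lemma Rdiv_mul_le a b o z : 0 < o -> 0 < z -> a <= b * z -> a / (o * z) <= b / o.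
Proof.
move=> ho hz hab; have -> : b / o = b * z / (o * z) by field; split; apply: Rgt_not_eq.
by apply: Rmult_le_compat_r => //; left; apply/Rinv_0_lt_compat/Rmult_lt_0_compat.
Qed.

Lemma Rdiv_pow_le a b x y z M : 0 < x -> 0 < z ->
  a * x ^ M <= b * (y * z) ^ M -> a / z ^ M <= b * (y / x) ^ M.
Proof.
move=> hx hz h; have hxM : 0 < x ^ M by apply: pow_lt.
have hzM : 0 < z ^ M by apply: pow_lt.
apply: (Rmult_le_reg_r (x ^ M * z ^ M)); first exact: Rmult_lt_0_compat.
rewrite Rpow_mult_distr in h; rewrite /Rdiv Rpow_mult_distr pow_inv.
have -> : a * / z ^ M * (x ^ M * z ^ M) = a * x ^ M * (z ^ M * / z ^ M) by ring.
have -> : b * (y ^ M * / x ^ M) * (x ^ M * z ^ M) = b * (y ^ M * z ^ M) * (x ^ M * / x ^ M) by ring.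
by rewrite !Rinv_r ?Rmult_1_r //; apply: Rgt_not_eq.
Qed.

Lemma ln_le_ln x y : 0 < x -> x <= y -> ln x <= ln y.
Proof.
move=> hx /Rle_lt_or_eq_dec [hxy | ->]; last exact: Rle_refl.
by left; apply: ln_increasing.
Qed.

Definition Rleb (x y : R) : bool := if Rle_dec x y then true else false.

Lemma RlebP x y : reflect (x <= y) (Rleb x y).
Proof. by rewrite /Rleb; case: Rle_dec => h; constructor. Qed.

Lemma Un_cv0_eventually_lt (u : nat -> R) d : Un_cv u 0 -> 0 < d ->
  exists N0, forall N, (N0 <= N)%N -> u N < d.
Proof.
move=> hu hd; have [N0 hN0] := hu d hd; exists N0 => N /leP hN.
by have := hN0 N hN; rewrite /Rdist Rminus_0_r => /(Rle_lt_trans _ _ _ (Rle_abs _)).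
Qed.

Lemma Un_cv_le_eventually (u v : nat -> R) l1 l2 n0 : Un_cv u l1 -> Un_cv v l2 ->
  (forall n, (n0 <= n)%N -> u n <= v n) -> l1 <= l2.
Proof.
move=> hu hv huv.
apply: (Rle_cv_lim (Un := fun n => u (n + n0)%coq_nat) (Vn := fun n => v (n + n0)%coq_nat)).
- by move=> n; apply: huv; lia.
- exact: CV_shift'.
- exact: CV_shift'.
Qed.

Lemma Un_cv_le_eventually_const (u : nat -> R) l K n0 : Un_cv u l ->
  (forall n, (n0 <= n)%N -> u n <= K) -> l <= K.
Proof.
move=> hu; apply: Un_cv_le_eventually hu _.
by move=> e he; exists 0%nat => n _; rewrite /Rdist Rminus_diag Rabs_R0.
Qed.

Lemma threshold_of_nonincreasing (f : R -> R) C :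
  (forall c, 0 < c -> f c <= 0) ->
  (forall a b, 0 < a -> a < b -> f b <= f a) ->
  0 < C -> f C < 0 ->
  exists c0, forall c, 0 < c -> (c < c0 -> f c = 0) /\ (c0 < c -> f c < 0).
Proof.
move=> f_le0 f_mono hC hfC.
pose E c := c <= 0 \/ (0 < c /\ f c = 0).
have E_ub : is_upper_bound E C.
  move=> c [hc | [hc hfc]]; first lra.
  apply: Rnot_lt_le => hCc; have := f_mono _ _ hC hCc; lra.
have E0 : E 0 by left; apply: Rle_refl.
have [c0 [c0_ub c0_lub]] := completeness E (ex_intro _ C E_ub) (ex_intro _ 0 E0).
exists c0 => c hc; split => hcc0.
- have [e Ee hce] : exists2 e, E e & c < e.
    apply: NNPP => hno; suff : c0 <= c by lra.
    apply: c0_lub => e Ee; apply: Rnot_lt_le => hce; apply: hno; by exists e.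
  case: Ee => [he | [he hfe]]; first lra.
  have := f_mono _ _ hc hce; have := f_le0 _ hc; lra.
- have [//|hfc] := Rle_lt_or_eq_dec _ _ (f_le0 _ hc).
  have := c0_ub c (or_intror (conj hc hfc)); lra.
Qed.

End RealFacts.

Lemma card_prod_le_section (A B : finType) (P : pred (A * B)) :
  (forall a, exists b, P (a, b)) -> (#|{: A * B}| <= #|P| * #|B|)%N.
Proof.
move=> hP; pose f a := (a, xchoose (hP a)).
have f_inj : injective f by move=> a1 a2 [].
rewrite card_prod leq_mul2r -(card_imset predT f_inj) -(cardsE P) orbC.
apply/orP; left; apply/subset_leq_card/subsetP => _ /imsetP [a _ ->].
by rewrite inE; exact: (xchooseP (hP a)).
Qed.

Lemma card_color_class N q (x : {ffun 'I_N -> 'I_q}) : (0 < q)%N ->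
  exists c, (N <= q * #|[pred u | x u == c]|)%N.
Proof.
move=> hq; have [|c hc] := @eq_bigmax _ (fun c : 'I_q => #|[pred u | x u == c]|).
  by rewrite card_ord.
exists c; rewrite -hc -[N in (N <= _)%N]card_ord -sum1_card.
rewrite (partition_big x predT) //= -[q in (_ <= q * _)%N]card_ord -sum_nat_const.
apply: leq_sum => c' _; rewrite sum1_card.
exact: (leq_bigmax (F := fun c : 'I_q => #|[pred u | x u == c]|)).
Qed.

Notation edge N m := ({ffun 'I_(arity m) -> 'I_N} * label m)%type.

Definition edge_pot N m (x : {ffun 'I_N -> 'I_(nq m)}) (e : edge N m) : nat :=
  pot e.2 [ffun k => x (e.1 k)].

Lemma pot_le1 m a y : (@pot m a y <= 1)%N.
Proof. by case: m a y => [q|K|K] a y /=; case: ifP. Qed.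

Lemma Hval_le N M m (w : Omega N M m) x : (Hval w x <= M)%N.
Proof.
rewrite -[M in (_ <= M)%N]card_ord -sum1_card.
by apply: leq_sum => i _; apply: pot_le1.
Qed.

Lemma Hmax_le N M m (w : Omega N M m) : (Hmax N M m w <= M)%N.
Proof. by apply/bigmax_leqP => x _; apply: Hval_le. Qed.

Lemma Hmax_attained N M m (w : Omega N M m) : (0 < nq m)%N ->
  exists x, Hmax N M m w = Hval w x.
Proof.
move=> hq; rewrite /Hmax; have [|x ->] := @eq_bigmax _ (fun x => Hval w x); last by exists x.
by rewrite card_ffun !card_ord expn_gt0 hq.
Qed.

Lemma card_Omega N M m : #|Omega N M m| = (#|{: edge N m}| ^ M)%N.
Proof. by rewrite card_ffun card_ord. Qed.

Definition drop_last N M m (w : Omega N M.+1 m) : Omega N M m :=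
  [ffun i => w (widen_ord (leqnSn M) i)].

Lemma Hval_drop_last N M m (w : Omega N M.+1 m) x :
  Hval w x = (Hval (drop_last w) x + edge_pot x (w ord_max))%N.
Proof.
by rewrite /Hval big_ord_recr /=; congr (_ + _); apply: eq_bigr => i _; rewrite ffunE.
Qed.

Lemma Hmax_drop_last N M m (w : Omega N M.+1 m) : (0 < nq m)%N ->
  (Hmax N M.+1 m w <= (Hmax N M m (drop_last w)).+1)%N.
Proof.
move=> hq; have [x ->] := Hmax_attained w hq.
rewrite Hval_drop_last -[X in (_ <= X)%N]addn1 leq_add ?pot_le1 //.
exact: (leq_bigmax (F := fun x => Hval (drop_last w) x)).
Qed.

Lemma card_drop_last_le N M m (A : pred (Omega N M.+1 m)) (B : pred (Omega N M m)) :
  (forall w, A w -> B (drop_last w)) -> (#|A| <= #|B| * #|{: edge N m}|)%N.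
Proof.
move=> AB; pose f (w : Omega N M.+1 m) := (drop_last w, w ord_max).
have f_inj : injective f.
  move=> w1 w2 [e1 e2]; apply/ffunP => i; have [iM | Mi] := ltnP i M.
    have -> : i = widen_ord (leqnSn M) (Ordinal iM) by apply: val_inj.
    by rewrite -[w1 _](ffunE (fun j => w1 (widen_ord (leqnSn M) j))) -/(drop_last w1) e1 ffunE.
  have -> : i = ord_max by apply: val_inj => /=; have := ltn_ord i; lia.
  exact: e2.
rewrite -(card_imset (mem A) f_inj) -cardsT -(cardsE B) -cardsX.
apply/subset_leq_card/subsetP => _ /imsetP [w Aw ->]; by rewrite !inE andbT; apply: AB.
Qed.

Lemma card_Hmax_ge_le_sum N M m k : (0 < nq m)%N ->
  (#|[pred w : Omega N M m | M <= Hmax N M m w + k]| <=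
   \sum_(x : {ffun 'I_N -> 'I_(nq m)}) #|[pred w : Omega N M m | M <= Hval w x + k]|)%N.
Proof.
move=> hq; rewrite -sum1_card.
under [X in (_ <= X)%N]eq_bigr => x _ do rewrite -sum1_card big_mkcond /=.
rewrite exchange_big /= big_mkcond /=; apply: leq_sum => w _.
case: ifP => //; rewrite inE; have [x ->] := Hmax_attained w hq => hx.
by rewrite (bigD1 x) //= inE hx leq_addr.
Qed.

Lemma sum_exp_Hval N M m x :
  (\sum_(w : Omega N M m) 2 ^ Hval w x = (\sum_(e : edge N m) 2 ^ edge_pot x e) ^ M)%N.
Proof.
under eq_bigr => w _ do rewrite /Hval expn_sum.
rewrite -(bigA_distr_bigA (fun (i : 'I_M) (e : edge N m) => 2 ^ edge_pot x e)).
by rewrite prod_nat_const card_ord.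
Qed.

(* Markov's inequality for the weight [2 ^ Hval w x]. *)
Lemma card_Hval_ge N M m x k :
  (#|[pred w : Omega N M m | M <= Hval w x + k]| * 2 ^ M <=
   2 ^ k * (\sum_(e : edge N m) 2 ^ edge_pot x e) ^ M)%N.
Proof.
rewrite -sum_exp_Hval -sum1_card big_distrl big_distrr /= big_mkcond /=.
apply: leq_sum => w _; case: ifP => // hw.
by rewrite mul1n -expnD leq_exp2l // addnC; move: hw; rewrite inE.
Qed.

Lemma sum_exp_edge_pot N m x :
  (\sum_(e : edge N m) 2 ^ edge_pot x e + #|[pred e : edge N m | edge_pot x e == 0]|
   = 2 * #|{: edge N m}|)%N.
Proof.
rewrite -sum1_card (big_mkcond (fun e => _ == _)) /= -big_split /= -sum1_card big_distrr /=.
apply: eq_bigr => e _; rewrite muln1 /edge_pot.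
by case: (pot _ _) (pot_le1 e.2 [ffun k => x (e.1 k)]) => [|[|]].
Qed.

(* Any fixed assignment violates at least a fraction [1 / viol_den m] of all
   hyperedges: for coloring, those with both ends in a largest color class (of
   size at least [N / q]); for (NAE-)K-SAT, each vertex tuple carries a violated
   label. *)
Definition viol_den (m : model) : nat :=
  match m with Coloring q => q * q | KSAT K | NAESAT K => 2 ^ K end.

Lemma ord2_val (y : 'I_2) : nat_of_bool (nat_of_ord y == 1%N) = y.
Proof. by case: y => [[|[|]]]. Qed.

Lemma card_edge_le_violated N m (x : {ffun 'I_N -> 'I_(nq m)}) : (0 < nq m)%N ->
  (#|{: edge N m}| <= #|[pred e : edge N m | edge_pot x e == 0]| * viol_den m)%N.
Proof.
case: m x => [q|K|K] x /= hq.
- have [c hc] := card_color_class x hq.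
  set n := #|[pred u | x u == c]| in hc.
  pose f (v : {ffun 'I_2 -> 'I_N}) := (v, tt).
  have f_inj : injective f by move=> v1 v2 [].
  have mono : (n ^ 2 <= #|[pred e : edge N (Coloring q) | edge_pot x e == 0]|)%N.
    have -> : (n ^ 2 = #|ffun_on_mem 'I_2 (mem [pred u | x u == c])|)%N.
      by rewrite card_ffun_on card_ord.
    rewrite -(card_in_imset (f := f)); last by move=> ? ? _ _; apply: f_inj.
    apply/subset_leq_card/subsetP => _ /imsetP [v /ffun_onP hv ->].
    rewrite inE /edge_pot /= !ffunE.
    by move: (hv ord0) (hv ord_max); rewrite !inE => /eqP -> /eqP ->; rewrite eqxx.
  rewrite card_prod card_unit muln1 card_ffun !card_ord.
  apply: leq_trans (leq_mul mono (leqnn (q * q))).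
  by rewrite -[q * q]/(q ^ 2) -expnMn leq_exp2r // mulnC.
all: apply: leq_trans (card_prod_le_section (P := [pred e | edge_pot x e == 0]) _) _;
  last by rewrite card_ffun card_bool card_ord.
all: move=> v; exists [ffun k => nat_of_ord (x (v k)) == 1%N]; rewrite inE /edge_pot /=.
all: by rewrite (_ : [forall k, _] = true) //; apply/forallP => k; rewrite !ffunE ord2_val.
Qed.

Lemma viol_den_gt0 m : (0 < nq m)%N -> (0 < viol_den m)%N.
Proof. by case: m => [q|K|K] /= hq; rewrite ?muln_gt0 ?hq ?expn_gt0. Qed.

Lemma card_Hmax_ge N M m k : (0 < nq m)%N ->
  (#|[pred w : Omega N M m | M <= Hmax N M m w + k]| * (2 * viol_den m) ^ M <=
   nq m ^ N * 2 ^ k * ((2 * viol_den m - 1) * #|{: edge N m}|) ^ M)%N.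
Proof.
move=> hq; apply: leq_trans (leq_mul (card_Hmax_ge_le_sum N M k hq) (leqnn _)) _.
have -> : (nq m ^ N = #|{: {ffun 'I_N -> 'I_(nq m)}}|)%N by rewrite card_ffun !card_ord.
rewrite big_distrl /= -!mulnA -sum_nat_const; apply: leq_sum => x _.
have weight := sum_exp_edge_pot x; have viol := card_edge_le_violated x hq.
have hd := viol_den_gt0 hq.
set S := (\sum_(e : edge N m) _)%N in weight *.
have S_le : (S * viol_den m <= (2 * viol_den m - 1) * #|{: edge N m}|)%N by nia.
rewrite expnMn mulnA; apply: leq_trans (leq_mul (card_Hval_ge M x k) (leqnn _)) _.
rewrite -mulnA leq_mul2l -expnMn; apply/orP; right.
by case: M => [|M] //; rewrite leq_exp2r.
Qed.

Lemma edge_pot_eq1 N m : model_ok m -> (2 <= N)%N ->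
  exists (x : {ffun 'I_N -> 'I_(nq m)}) (e : edge N m), edge_pot x e = 1%N.
Proof.
move=> hm hN; have hN0 : (0 < N)%N by lia.
pose v0 := Ordinal hN0; pose v1 := Ordinal hN.
case: m hm => [q|K|K] /= hm.
- have hq0 : (0 < q)%N by lia.
  exists [ffun u : 'I_N => if nat_of_ord u == 0%N then Ordinal hq0 else Ordinal hm].
  exists ([ffun j : 'I_2 => if nat_of_ord j == 0%N then v0 else v1], tt).
  by rewrite /edge_pot /= !ffunE.
- have hK : (0 < K)%N by lia.
  exists [ffun _ => Ordinal (isT : (0 < 2)%N)], ([ffun _ => v0], [ffun _ => true]).
  rewrite /edge_pot /=; case: ifP => // /forallP /(_ (Ordinal hK)).
  by rewrite !ffunE.
- have hK : (0 < K)%N by lia.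
  exists [ffun _ => Ordinal (isT : (0 < 2)%N)].
  exists ([ffun _ => v0], [ffun k : 'I_K => nat_of_ord k == 0%N]).
  rewrite /edge_pot /=; case: ifP => // /orP [] /forallP.
    by move/(_ (Ordinal hK)); rewrite !ffunE.
  by move/(_ (Ordinal hm)); rewrite !ffunE.
Qed.

(* The instance repeating a single hyperedge satisfied by some assignment is satisfiable. *)
Lemma card_Hmax_eq_gt0 N M m : model_ok m -> (2 <= N)%N ->
  (0 < #|[pred w : Omega N M m | Hmax N M m w == M]|)%N.
Proof.
move=> hm hN; have [x [e he]] := edge_pot_eq1 hm hN.
apply/card_gt0P; exists [ffun _ => e]; rewrite inE eqn_leq Hmax_le /=.
apply: leq_trans (leq_bigmax (F := fun x => Hval [ffun _ => e] x) x).
rewrite -[M in (M <= _)%N]card_ord -sum1_card; apply: leq_sum => i _.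
by rewrite ffunE -/(edge_pot x e) he.
Qed.

Lemma card_edge_gt0 N m : (0 < N)%N -> (0 < #|{: edge N m}|)%N.
Proof.
move=> hN; apply/card_gt0P.
have a : label m by case: m => [q|K|K]; [exact: tt | exact: [ffun=> true] ..].
by exists ([ffun _ => Ordinal hN], a).
Qed.

Lemma card_Omega_gt0 N M m : (0 < N)%N -> (0 < #|Omega N M m|)%N.
Proof. by move=> hN; rewrite card_Omega expn_gt0 card_edge_gt0. Qed.

Lemma nq_gt0 m : model_ok m -> (0 < nq m)%N.
Proof. by case: m => [q|K|K] //= hm; lia. Qed.


Local Open Scope R_scope.

Lemma probR_subset N M m (E F : pred (Omega N M m)) :
  {subset E <= F} -> probR N M m E <= probR N M m F.
Proof.
move=> EF; apply: Rmult_le_compat_r; first exact: Rinv_INR_ge0.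
by apply/le_INR/leP/subset_leq_card/subsetP.
Qed.

Lemma probR_predT N M m : (0 < N)%N -> probR N M m predT = 1.
Proof.
move=> hN; rewrite /probR (@eq_card _ _ (Omega N M m)) // /Rdiv Rinv_r //.
by apply/not_0_INR/eqP; rewrite -lt0n card_Omega_gt0.
Qed.

Lemma probR_predC N M m (E : pred (Omega N M m)) : (0 < N)%N ->
  probR N M m (predC E) = 1 - probR N M m E.
Proof.
move=> hN; have hOR : INR #|Omega N M m| <> 0.
  by apply/not_0_INR/eqP; rewrite -lt0n card_Omega_gt0.
have hC : INR #|E| + INR #|predC E| = INR #|Omega N M m|.
  by rewrite -plus_INR -(cardC E); congr (INR (_ + _)); apply: eq_card.
rewrite /probR -hC in hOR *; by move: (INR _) (INR _) hOR => a b hab; field.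
Qed.

Definition upward_closed (P : pred nat) := forall n, P n -> P n.+1.

Lemma upward_closed_le (P : pred nat) a b :
  upward_closed P -> (a <= b)%N -> P a -> P b.
Proof.
move=> hP /subnKC <-; elim: (b - a)%N => [|k IH]; first by rewrite addn0.
by move/IH; rewrite addnS; apply: hP.
Qed.

Lemma probR_Hmax_step N M m (P : pred nat) :
  (0 < N)%N -> (0 < nq m)%N -> upward_closed P ->
  probR N M.+1 m [pred w | P (Hmax N M.+1 m w)] <=
  probR N M m [pred w | P (Hmax N M m w).+1].
Proof.
move=> hN hq hP.
have := @card_drop_last_le N M m [pred w | P (Hmax _ _ _ w)]
  [pred w | P (Hmax _ _ _ w).+1] (fun w => upward_closed_le hP (Hmax_drop_last w hq)).
rewrite /probR card_Omega expnSr -card_Omega -multE mult_INR => hcard.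
apply: Rdiv_mul_le; try apply/lt_0_INR/ltP; rewrite ?card_Omega_gt0 ?card_edge_gt0 //.
by rewrite -mult_INR; apply/le_INR/leP.
Qed.

(* Removing [d] hyperedges lowers [Hmax] by at most [d]. *)
Lemma probR_Hmax_shift N m (P : pred nat) d M :
  (0 < N)%N -> (0 < nq m)%N -> upward_closed P ->
  probR N (d + M) m [pred w | P (Hmax N (d + M) m w)] <=
  probR N M m [pred w | P (Hmax N M m w + d)%N].
Proof.
move=> hN hq; elim: d P => [|d IH] P hP.
  by apply: probR_subset => w; rewrite !inE addn0.
rewrite addSn; apply: Rle_trans (probR_Hmax_step (d + M) hN hq hP) _.
apply: Rle_trans (IH (fun n => P n.+1) (fun n => hP n.+1)) _.
by apply: probR_subset => w; rewrite !inE addnS.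
Qed.

Lemma pSAT_le N m M1 M2 : (0 < N)%N -> (0 < nq m)%N -> (M1 <= M2)%N ->
  pSAT N M2 m <= pSAT N M1 m.
Proof.
move=> hN hq /subnK <-; move: (M2 - M1)%N => d.
have up : upward_closed (fun n => d + M1 <= n)%N by move=> n /leqW.
have eq_le : {subset [pred w : Omega N (d + M1) m | Hmax _ _ _ w == d + M1]
                 <= [pred w | d + M1 <= Hmax _ _ _ w]}%N.
  by move=> w; rewrite !inE => /eqP ->.
refine (Rle_trans _ _ _ (probR_subset eq_le)
  (Rle_trans _ _ _ (probR_Hmax_shift d M1 hN hq up) _)).
apply: probR_subset => w; rewrite !inE [(Hmax _ _ _ w + d)%N]addnC leq_add2l => hw.
by rewrite unfold_in /= eqn_leq hw Hmax_le.
Qed.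

Lemma pSAT_gt0 N M m : model_ok m -> (2 <= N)%N -> 0 < pSAT N M m.
Proof.
move=> hm hN; apply: Rdiv_lt_0_compat; apply/lt_0_INR/ltP.
  exact: card_Hmax_eq_gt0.
by apply: card_Omega_gt0; lia.
Qed.

Lemma pSAT_le1 N M m : (0 < N)%N -> pSAT N M m <= 1.
Proof. by move=> hN; rewrite -(probR_predT M m hN); apply: probR_subset. Qed.

Definition decay m := 1 - / (2 * INR (viol_den m)).

Lemma decay_bounds m : (0 < nq m)%N -> 0 < decay m < 1.
Proof.
move=> hq; have hD : 1 <= INR (viol_den m) by apply/(le_INR 1)/leP/viol_den_gt0.
have hi : 0 < / (2 * INR (viol_den m)) by apply: Rinv_0_lt_compat; lra.
have : / (2 * INR (viol_den m)) <= / 2 by apply: Rinv_le_contravar; lra.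
rewrite /decay; lra.
Qed.

Lemma probR_Hmax_ge N M m k : (0 < N)%N -> (0 < nq m)%N -> (k <= N)%N ->
  probR N M m [pred w | M <= Hmax N M m w + k]%N <= (2 * INR (nq m)) ^ N * decay m ^ M.
Proof.
move=> hN hq hk; have hd := viol_den_gt0 hq.
have := le_INR _ _ (elimT leP (card_Hmax_ge N M k hq)).
rewrite -!multE -minusE !mult_INR !INR_expn !mult_INR minus_INR; last first.
  by apply/leP; rewrite multE muln_gt0 hd.
rewrite !mult_INR (_ : INR 2 = 2) // (_ : INR 1 = 1) // /probR card_Omega INR_expn.
have hD : 1 <= INR (viol_den m) by apply/(le_INR 1)/leP.
have decayE : decay m = (2 * INR (viol_den m) - 1) / (2 * INR (viol_den m)).
  by rewrite /decay; field; apply: Rgt_not_eq; lra.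
have hZ : 0 < INR #|{: edge N m}| by apply/lt_0_INR/ltP/card_edge_gt0.
move/Rdiv_pow_le; rewrite -decayE => /(_ ltac:(lra) hZ) hfm.
apply: Rle_trans hfm _; rewrite Rpow_mult_distr [2 ^ N * _]Rmult_comm.
have [d0 _] := decay_bounds hq.
apply: Rmult_le_compat_r; first by apply: pow_le; lra.
apply: Rmult_le_compat_l; first by apply/pow_le/pos_INR.
by apply: Rle_pow; [lra | apply/leP].
Qed.

Lemma Mof_bounds c N : 0 <= c ->
  INR (Mof c N) <= c * INR N /\ c * INR N - 1 < INR (Mof c N).
Proof.
move=> hc; have hN := pos_INR N; have [h1 h2] := base_Int_part (c * INR N).
have hz : (0 <= Int_part (c * INR N))%Z.
  suff : (-1 < Int_part (c * INR N))%Z by lia.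
  by apply: lt_IZR; nra.
rewrite /Mof INR_IZR_INZ Znat.Z2Nat.id //; lra.
Qed.

Lemma Mof_le c1 c2 N : 0 <= c1 <= c2 -> (Mof c1 N <= Mof c2 N)%N.
Proof.
move=> [h1 h2]; have [a1 b1] := Mof_bounds N h1.
have [a2 b2] := Mof_bounds N (Rle_trans _ _ _ h1 h2).
have : INR (Mof c1 N) < INR (Mof c2 N) + 1 by have := pos_INR N; nra.
by rewrite -S_INR => /INR_lt /ltP.
Qed.

(* Chosen so that [ln (2 q) + c * ln (decay m) = -1]. *)
Definition c_first_moment m := (ln (2 * INR (nq m)) + 1) / - ln (decay m).

Lemma c_first_moment_gt0 m : (0 < nq m)%N -> 0 < c_first_moment m.
Proof.
move=> hq; have [d0 d1] := decay_bounds hq.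
have hQ : 1 <= INR (nq m) by apply/(le_INR 1)/leP.
have : ln (decay m) < 0 by rewrite -ln_1; apply: ln_increasing.
have : 0 < ln (2 * INR (nq m)) by rewrite -ln_1; apply: ln_increasing; lra.
by move=> *; apply: Rdiv_lt_0_compat; lra.
Qed.

Lemma ln_first_moment_bound m N : (0 < nq m)%N ->
  ln ((2 * INR (nq m)) ^ N * decay m ^ Mof (c_first_moment m) N) <=
  - INR N - ln (decay m).
Proof.
move=> hq; have [d0 d1] := decay_bounds hq.
have hQ : 1 <= INR (nq m) by apply/(le_INR 1)/leP.
have hl : ln (decay m) < 0 by rewrite -ln_1; apply: ln_increasing.
have hc := c_first_moment_gt0 hq.
have [_ hM] := Mof_bounds N (Rlt_le _ _ hc).
have hC : ln (2 * INR (nq m)) + c_first_moment m * ln (decay m) = -1.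
  by rewrite /c_first_moment; field; apply: Rlt_not_eq.
rewrite ln_mult ?ln_pow; try (apply: pow_lt; lra); try lra.
have := pos_INR N; nra.
Qed.

Lemma dev_eventP N M m h eps w :
  reflect (eps < Rabs (INR (Hmax N M m w) / INR N - h)) (dev_event N M m h eps w).
Proof. by rewrite /dev_event; case: Rlt_dec => hw; constructor. Qed.

Section DevEvent.
Variables (N M : nat) (m : model) (h eps : R) (w : Omega N M m).
Hypothesis hN : (0 < N)%N.

Let hNR : 0 < INR N. Proof. exact/lt_0_INR/ltP. Qed.

Let HmaxN_mul : INR (Hmax N M m w) / INR N * INR N = INR (Hmax N M m w).
Proof. by field; apply: Rgt_not_eq. Qed.

Lemma dev_of_Hmax_lt : INR (Hmax N M m w) < (h - eps) * INR N -> dev_event N M m h eps w.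
Proof.
move=> hw; apply/dev_eventP.
have : INR (Hmax N M m w) / INR N < h - eps.
  by apply: (Rmult_lt_reg_r (INR N)); rewrite ?HmaxN_mul.
have := Rle_abs (- (INR (Hmax N M m w) / INR N - h)); rewrite Rabs_Ropp; lra.
Qed.

Lemma dev_of_Hmax_gt : (h + eps) * INR N < INR (Hmax N M m w) -> dev_event N M m h eps w.
Proof.
move=> hw; apply/dev_eventP.
have : h + eps < INR (Hmax N M m w) / INR N.
  by apply: (Rmult_lt_reg_r (INR N)); rewrite ?HmaxN_mul.
have := Rle_abs (INR (Hmax N M m w) / INR N - h); lra.
Qed.

Lemma Hmax_ge_of_not_dev : ~~ dev_event N M m h eps w -> (h - eps) * INR N <= INR (Hmax N M m w).
Proof. by move=> hw; apply: Rnot_lt_le => /dev_of_Hmax_lt; apply/negP. Qed.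

End DevEvent.

Section HLimit.
Variables (m : model) (Hlim : R -> R).
Hypothesis hq : (0 < nq m)%N.
Hypothesis HypH : forall c : R, 0 < c -> forall eps : R, 0 < eps ->
  Un_cv (fun N => probR N (Mof c N) m (dev_event N (Mof c N) m (Hlim c) eps)) 0.

Lemma Hlim_le c : 0 < c -> Hlim c <= c.
Proof.
move=> hc; apply: Rnot_lt_le => hlt; set eps := (Hlim c - c) / 2.
have [N0 hN0] := Un_cv0_eventually_lt (HypH hc (eps := eps) ltac:(rewrite /eps; lra)) Rlt_0_1.
have hN : (0 < N0.+1)%N by [].
suff : probR N0.+1 (Mof c N0.+1) m predT <= probR N0.+1 (Mof c N0.+1) m
         (dev_event N0.+1 (Mof c N0.+1) m (Hlim c) eps).
  by rewrite probR_predT //; have := hN0 N0.+1 (leqnSn N0); lra.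
apply: probR_subset => w _; apply: dev_of_Hmax_lt => //.
have [hM _] := Mof_bounds N0.+1 (Rlt_le _ _ hc).
have := le_INR _ _ (elimT leP (Hmax_le w)).
have : 0 < INR N0.+1 by apply/lt_0_INR/ltP.
rewrite /eps; nra.
Qed.

Lemma typical_Hmax_ge c eps : 0 < c -> 0 < eps -> exists N0, forall N, (N0 <= N)%N ->
  / 2 < probR N (Mof c N) m [pred w | Rleb ((Hlim c - eps) * INR N) (INR (Hmax _ _ _ w))].
Proof.
move=> hc heps; have [N0 hN0] := Un_cv0_eventually_lt (HypH hc heps) (Rinv_0_lt_compat 2 Rlt_0_2).
exists N0.+1 => N hN; have hN1 : (0 < N)%N by lia.
apply: Rlt_le_trans (probR_subset (E := predC (dev_event _ _ _ (Hlim c) eps)) _).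
  by rewrite probR_predC //; have := hN0 N (ltnW hN); lra.
by move=> w /Hmax_ge_of_not_dev hw; rewrite inE; apply/RlebP/hw.
Qed.

Lemma Hlim_sub_le c1 c2 : 0 < c1 -> c1 < c2 -> Hlim c2 - c2 <= Hlim c1 - c1.
Proof.
move=> hc1 hc12; apply: Rnot_lt_le => hlt; have hc2 : 0 < c2 by lra.
set eps := ((Hlim c2 - c2) - (Hlim c1 - c1)) / 4.
have heps : 0 < eps by rewrite /eps; lra.
have [A hA] := typical_Hmax_ge hc2 heps.
have [B hB] := Un_cv0_eventually_lt (HypH hc1 heps) (Rinv_0_lt_compat 2 Rlt_0_2).
have [n1 hn1] := INR_unbounded (/ eps).
set N := (A + B + n1).+1.
have hN : (0 < N)%N by [].
have hNR : 0 < INR N by apply/lt_0_INR/ltP.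
have hepsN : 1 < eps * INR N.
  have : INR n1 <= INR N by apply/le_INR/leP; rewrite /N; lia.
  have : eps * / eps = 1 by field; apply: Rgt_not_eq.
  nra.
have [hM1 hM1'] := Mof_bounds N (Rlt_le _ _ hc1).
have [hM2 _] := Mof_bounds N (Rlt_le _ _ hc2).
have hM12 := @Mof_le c1 c2 N (conj (Rlt_le _ _ hc1) (Rlt_le _ _ hc12)).
set th := (Hlim c2 - eps) * INR N.
pose P := [pred n | Rleb th (INR n)].
have up : upward_closed P by move=> n /RlebP hn; apply/RlebP; rewrite S_INR; lra.
have shift := probR_Hmax_shift (Mof c2 N - Mof c1 N) (Mof c1 N) hN hq up.
rewrite subnK // in shift.
have typ : / 2 < probR N (Mof c2 N) m [pred w | P (Hmax _ _ _ w)].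
  exact: hA N ltac:(rewrite /N; lia).
have atyp := hB N ltac:(rewrite /N; lia).
suff : probR N (Mof c1 N) m [pred w | P (Hmax _ _ _ w + (Mof c2 N - Mof c1 N))%N]
       <= probR N (Mof c1 N) m (dev_event N (Mof c1 N) m (Hlim c1) eps) by lra.
apply: probR_subset => w; rewrite inE => /RlebP hw; apply: dev_of_Hmax_gt => //.
rewrite plus_INR minus_INR in hw; last exact/leP.
have e : Hlim c2 = Hlim c1 - c1 + c2 + 4 * eps by rewrite /eps; field.
rewrite /th e in hw; lra.
Qed.

Lemma Hlim_c_first_moment_lt : Hlim (c_first_moment m) < c_first_moment m.
Proof.
set C := c_first_moment m; have hC : 0 < C := c_first_moment_gt0 hq.
have [// | HC] := Rle_lt_or_eq_dec _ _ (Hlim_le hC).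
have [A hA] := typical_Hmax_ge hC (Rinv_0_lt_compat 2 Rlt_0_2).
have [n1 hn1] := INR_unbounded (ln 2 - ln (decay m)).
set N := (A + n1).+1; have hN : (0 < N)%N by [].
have hn1N : INR n1 <= INR N by apply/le_INR/leP; rewrite /N; lia.
have [hM _] := Mof_bounds N (Rlt_le _ _ hC).
have typ := hA N ltac:(rewrite /N; lia).
set M := Mof C N in hM typ *.
have sub : probR N M m [pred w | Rleb ((Hlim C - / 2) * INR N) (INR (Hmax _ _ _ w))]
           <= probR N M m [pred w | M <= Hmax N M m w + N]%N.
  apply: probR_subset => w; rewrite !inE HC => /RlebP hw.
  apply/leP/INR_le; rewrite plus_INR; have := pos_INR N; lra.
have fm := probR_Hmax_ge M hN hq (leqnn N).
have [d0 _] := decay_bounds hq.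
have hfm : / 2 < (2 * INR (nq m)) ^ N * decay m ^ M by lra.
have := ln_first_moment_bound N hq; rewrite -/C -/M.
have := ln_increasing _ _ (Rinv_0_lt_compat 2 Rlt_0_2) hfm.
rewrite ln_Rinv; lra.
Qed.

End HLimit.

Section PLimit.
Variables (m : model) (plim : R -> R).
Hypothesis hm : model_ok m.
Hypothesis Hypp : forall c : R, 0 < c ->
  Un_cv (fun N => ln (pSAT N (Mof c N) m) / INR N) (plim c).

Lemma plim_le0 c : 0 < c -> plim c <= 0.
Proof.
move=> hc; apply: (Un_cv_le_eventually_const (n0 := 2) (Hypp hc)) => N hN.
have hNR : 0 < INR N by apply/lt_0_INR/ltP; lia.
apply: Rdiv_le_of_le_mul => //; rewrite Rmult_0_l -ln_1.
by apply: ln_le_ln; [apply: pSAT_gt0 | apply: pSAT_le1; lia].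
Qed.

Lemma plim_le c1 c2 : 0 < c1 -> c1 < c2 -> plim c2 <= plim c1.
Proof.
move=> hc1 hc12; have hc2 : 0 < c2 by lra.
apply: (Un_cv_le_eventually (n0 := 2) (Hypp hc2) (Hypp hc1)) => N hN.
apply: Rmult_le_compat_r; first by left; apply/Rinv_0_lt_compat/lt_0_INR/ltP; lia.
apply: ln_le_ln; first exact: pSAT_gt0.
apply: pSAT_le; [lia | exact: nq_gt0 | apply: Mof_le; lra].
Qed.

Lemma plim_c_first_moment_lt0 : plim (c_first_moment m) < 0.
Proof.
have hq := nq_gt0 hm; set C := c_first_moment m; have hC : 0 < C := c_first_moment_gt0 hq.
have [d0 d1] := decay_bounds hq.
have [n1 hn1] := INR_unbounded (- 2 * ln (decay m)).
suff : plim C <= - / 2 by lra.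
apply: (Un_cv_le_eventually_const (n0 := n1.+2) (Hypp hC)) => N hN.
have hNR : 0 < INR N by apply/lt_0_INR/ltP; lia.
have hn1N : INR n1 <= INR N by apply/le_INR/leP; lia.
have sat_sub : pSAT N (Mof C N) m <= probR N (Mof C N) m [pred w | Mof C N <= Hmax _ _ _ w + 0]%N.
  by apply: probR_subset => w; rewrite inE addn0 => /eqP ->.
have hN0 : (0 < N)%N by lia.
have fm := probR_Hmax_ge (Mof C N) hN0 hq (leq0n N).
have hp := pSAT_gt0 (N := N) (Mof C N) hm ltac:(lia).
have := ln_first_moment_bound N hq; rewrite -/C.
have := ln_le_ln hp (Rle_trans _ _ _ sat_sub fm).
move=> h1 h2; apply: Rdiv_le_of_le_mul => //; lra.
Qed.

End PLimit.

Theorem corollary1 (m : model) (Hlim plim : R -> R) :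
  model_ok m ->
  (forall c : R, 0 < c -> forall eps : R, 0 < eps ->
     Un_cv (fun N => probR N (Mof c N) m (dev_event N (Mof c N) m (Hlim c) eps)) 0) ->
  (forall c : R, 0 < c ->
     Un_cv (fun N => ln (pSAT N (Mof c N) m) / INR N) (plim c)) ->
  (exists cH : R, forall c : R, 0 < c ->
      (c < cH -> Hlim c = c) /\ (cH < c -> Hlim c < c)) /\
  (exists cp : R, forall c : R, 0 < c ->
      (c < cp -> plim c = 0) /\ (cp < c -> plim c < 0)).
Proof.
move=> hm HypH Hypp; have hq := nq_gt0 hm; have hC := c_first_moment_gt0 hq.
split.
- have [cH hcH] := threshold_of_nonincreasing (f := fun c => Hlim c - c)
    (fun c hc => Rle_minus _ _ (Hlim_le HypH hc))
    (fun a b ha hab => Hlim_sub_le hq HypH ha hab) hC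
    (Rlt_minus _ _ (Hlim_c_first_moment_lt hq HypH)).
  exists cH => c hc; have [h1 h2] := hcH c hc.
  by split => h; [have := h1 h | have := h2 h]; lra.
- exact: threshold_of_nonincreasing (plim_le0 hm Hypp) (plim_le hm Hypp)
    hC (plim_c_first_moment_lt0 hm Hypp).
Qed.
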